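(* Let $k\ge1$, let $\Lambda$ be a row-finite $k$-graph with no sources and $R$ a commutative ring with $1$. The following are equivalent: (1) $\mathrm{KP}_R(\Lambda)$ is commutative; (2) $r(\lambda)=s(\lambda)$ for all $\lambda\in\Lambda$, and for every $n\in\mathbb{N}^k$ the restriction of $r$ to $\Lambda^n$ is injective; (3) $\Lambda$ is isomorphic (as a $k$-graph) to the disjoint union $\bigsqcup_{v\in\Lambda^0}\mathbb{N}^k$ of copies of $\mathbb{N}^k$, where $\mathbb{N}^k$ is viewed as a $k$-graph with one object and degree map the identity; (4) $\mathrm{KP}_R(\Lambda)\cong\bigoplus_{v\in\Lambda^0}R[x_1,x_1^{-1},\ldots,x_k,x_k^{-1}]$ (Laurent polynomials in $k$ commuting indeterminates).
   Context: $\mathbb{N}^k$ is regarded as a category with one object, composition being addition. A $k$-graph is a countable category $\Lambda$ with a functor $d:\Lambda\to\mathbb{N}^k$ with unique factorization: whenever $d(\lambda)=m+n$ there are unique $\mu,\nu$ with $d(\mu)=m$, $d(\nu)=n$, $\lambda=\mu\nu$. Vertices (objects) are identified with degree-$0$ morphisms; $\Lambda^0$ is the vertex set, $\Lambda^n=d^{-1}(n)$, $r,s$ are range and source, $\lambda\mu$ is defined when $s(\lambda)=r(\mu)$; $v\Lambda^n=\{\lambda\in\Lambda^n:r(\lambda)=v\}$. Row-finite: each $v\Lambda^n$ is finite; no sources: each $v\Lambda^n$ is nonempty. With $\Lambda^{\neq0}$ the paths of nonzero degree and formal symbols $\lambda^*$, a Kumjian-Pask $\Lambda$-family in an $R$-algebra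 $A$ is $P:\Lambda^0\to A$, $S:\Lambda^{\neq0}\cup\{\lambda^*\}\to A$ with: (KP1) the $P_v$ are mutually orthogonal idempotents; (KP2) for $r(\mu)=s(\lambda)$: $S_\lambda S_\mu=S_{\lambda\mu}$, $S_{\mu^*}S_{\lambda^*}=S_{(\lambda\mu)^*}$, $P_{r(\lambda)}S_\lambda=S_\lambda=S_\lambda P_{s(\lambda)}$, $P_{s(\lambda)}S_{\lambda^*}=S_{\lambda^*}=S_{\lambda^*}P_{r(\lambda)}$; (KP3) $S_{\lambda^*}S_\mu=\delta_{\lambda,\mu}P_{s(\lambda)}$ when $d(\lambda)=d(\mu)$; (KP4) $P_v=\sum_{\lambda\in v\Lambda^n}S_\lambda S_{\lambda^*}$ for $n\neq0$. $\mathrm{KP}_R(\Lambda)$ is the $R$-algebra generated by a universal Kumjian-Pask $\Lambda$-family $(p,s)$ (every Kumjian-Pask family in an $R$-algebra is the image of $(p,s)$ under a unique $R$-algebra homomorphism). *)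

From HB Require Import structures.
From mathcomp Require Import all_boot all_algebra.
From mathcomp Require Import finmap.
From mathcomp.multinomials Require Import monalg.

Set Implicit Arguments.
Unset Strict Implicit.
Unset Printing Implicit Defensive.

Import GRing.Theory.
Local Open Scope ring_scope.

Notation Nk k := {ffun 'I_k -> nat}.

(* Composition [kcomp l m] (= l m, "l after m") is only
   meaningful when [ks l = kr m]; the axioms only constrain that case.     *)
Record kgraph (k : nat) := KGraph {
  kv : countType;
  kp : countType;
  kr : kp -> kv;
  ks : kp -> kv;
  kid : kv -> kp;
  kcomp : kp -> kp -> kp;
  kd : kp -> Nk k;
  kr_id : forall v, kr (kid v) = v;
  ks_id : forall v, ks (kid v) = v;
  kr_comp : forall l m, ks l = kr m -> kr (kcomp l m) = kr l;
  ks_comp : forall l m, ks l = kr m -> ks (kcomp l m) = ks m;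
  kcomp_idl : forall l, kcomp (kid (kr l)) l = l;
  kcomp_idr : forall l, kcomp l (kid (ks l)) = l;
  kcompA : forall l m n, ks l = kr m -> ks m = kr n ->
             kcomp (kcomp l m) n = kcomp l (kcomp m n);
  kd_id : forall v, kd (kid v) = 0;
  kd_comp : forall l m, ks l = kr m -> kd (kcomp l m) = kd l + kd m;
  kfact : forall l (m n : Nk k), kd l = m + n ->
     exists! mn : kp * kp,
       [/\ ks mn.1 = kr mn.2, kd mn.1 = m, kd mn.2 = n & l = kcomp mn.1 mn.2]
}.

Definition row_finite k (L : kgraph k) : Prop :=
  forall (v : kv L) (n : Nk k), exists s : seq (kp L),
    forall l, l \in s <-> (kr l = v /\ kd l = n).

Definition no_sources k (L : kgraph k) : Prop :=
  forall (v : kv L) (n : Nk k), exists l : kp L, kr l = v /\ kd l = n.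

Definition kgraph_iso k (L1 L2 : kgraph k) : Prop :=
  exists (fv : kv L1 -> kv L2) (fp : kp L1 -> kp L2),
    [/\ bijective fv /\ bijective fp,
        (forall l, kr (fp l) = fv (kr l)) /\ (forall l, ks (fp l) = fv (ks l)),
        (forall v, fp (kid v) = kid (fv v)),
        (forall l m, ks l = kr m -> fp (kcomp l m) = kcomp (fp l) (fp m))
      & (forall l, kd (fp l) = kd l)].

Section DisjointUnion.
Variables (k : nat) (V : countType).

Definition du_r (x : V * Nk k) : V := x.1.
Definition du_id (v : V) : V * Nk k := (v, 0).
Definition du_comp (x y : V * Nk k) : V * Nk k := (x.1, x.2 + y.2).
Definition du_d (x : V * Nk k) : Nk k := x.2.

Lemma du_kr_id v : du_r (du_id v) = v. Proof. by []. Qed.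
Lemma du_kr_comp l m : du_r l = du_r m -> du_r (du_comp l m) = du_r l.
Proof. by []. Qed.
Lemma du_ks_comp l m : du_r l = du_r m -> du_r (du_comp l m) = du_r m.
Proof. by []. Qed.
Lemma du_idl l : du_comp (du_id (du_r l)) l = l.
Proof. by case: l => v m; rewrite /du_comp /= add0r. Qed.
Lemma du_idr l : du_comp l (du_id (du_r l)) = l.
Proof. by case: l => v m; rewrite /du_comp /= addr0. Qed.
Lemma du_compA l m n : du_r l = du_r m -> du_r m = du_r n ->
  du_comp (du_comp l m) n = du_comp l (du_comp m n).
Proof. by move=> _ _; rewrite /du_comp /= addrA. Qed.
Lemma du_d_id v : du_d (du_id v) = 0. Proof. by []. Qed.
Lemma du_d_comp l m : du_r l = du_r m -> du_d (du_comp l m) = du_d l + du_d m.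
Proof. by []. Qed.
Lemma du_fact l (m n : Nk k) : du_d l = m + n ->
  exists! mn : (V * Nk k) * (V * Nk k),
    [/\ du_r mn.1 = du_r mn.2, du_d mn.1 = m, du_d mn.2 = n
      & l = du_comp mn.1 mn.2].
Proof.
case: l => v d /= Hd; exists ((v, m), (v, n)); split.
  by split => //; rewrite /du_comp /= Hd.
case=> [[a ma] [b mb]] /= [Hab Hm Hn]; rewrite /du_comp /= => [[Hv _]].
by rewrite /du_r /= in Hab; subst.
Qed.

Definition disjoint_union_Nk : kgraph k :=
  @KGraph k V (V * Nk k)%type du_r du_r du_id du_comp du_d
    du_kr_id du_kr_id du_kr_comp du_ks_comp du_idl du_idr du_compA
    du_d_id du_d_comp du_fact.
End DisjointUnion.

(* Kumjian-Pask algebras are in general non-unital, so we cannot use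
   MathComp's (unital) algType; we package the data explicitly.         *)
Record nalg (R : comNzRingType) := NAlg {
  ncar :> zmodType;
  nscale : R -> ncar -> ncar;
  nmul : ncar -> ncar -> ncar;
  nscaleA : forall a b x, nscale a (nscale b x) = nscale (a * b) x;
  nscale1 : forall x, nscale 1 x = x;
  nscaleDr : forall a x y, nscale a (x + y) = nscale a x + nscale a y;
  nscaleDl : forall a b x, nscale (a + b) x = nscale a x + nscale b x;
  nmulA : forall x y z, nmul x (nmul y z) = nmul (nmul x y) z;
  nmulDl : forall x y z, nmul (x + y) z = nmul x z + nmul y z;
  nmulDr : forall x y z, nmul x (y + z) = nmul x y + nmul x z;
  nmulZl : forall a x y, nmul (nscale a x) y = nscale a (nmul x y);
  nmulZr : forall a x y, nmul x (nscale a y) = nscale a (nmul x y)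
}.
Arguments nscale {R} A a x : rename.
Arguments nmul {R} A x y : rename.

Definition nalg_hom (R : comNzRingType) (A B : nalg R) (f : A -> B) : Prop :=
  [/\ forall x y : A, f (x + y) = f x + f y,
      forall (a : R) (x : A), f (nscale A a x) = nscale B a (f x)
    & forall x y : A, f (nmul A x y) = nmul B (f x) (f y)].

Definition nalg_commutative (R : comNzRingType) (A : nalg R) : Prop :=
  forall x y : A, nmul A x y = nmul A y x.

(* The paper's S is defined on the paths of
   nonzero degree and their ghosts; we take S, Sst total on paths and fix
   the standard convention S_v = S_{v*} = P_v on vertices, imposing
   (KP2)-(KP4) exactly as in the paper, i.e. for paths of nonzero degree. *)
Definition KP_family (R : comNzRingType) k (L : kgraph k) (A : nalg R)
    (P : kv L -> A) (S Sst : kp L -> A) : Prop :=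
  [/\
      (forall v, S (kid v) = P v /\ Sst (kid v) = P v),
      (forall v, nmul A (P v) (P v) = P v) /\
      (forall v w, v <> w -> nmul A (P v) (P w) = 0),
      (forall l m, kd l != 0 -> kd m != 0 -> ks l = kr m ->
         nmul A (S l) (S m) = S (kcomp l m) /\
         nmul A (Sst m) (Sst l) = Sst (kcomp l m)) /\
      (forall l, kd l != 0 ->
         [/\ nmul A (P (kr l)) (S l) = S l, nmul A (S l) (P (ks l)) = S l,
             nmul A (P (ks l)) (Sst l) = Sst l
           & nmul A (Sst l) (P (kr l)) = Sst l]),
      (forall l m, kd l != 0 -> kd l = kd m ->
         nmul A (Sst l) (S m) = if l == m then P (ks l) else 0)
    &
      (forall (v : kv L) (n : Nk k), n != 0 ->
         forall s : seq (kp L), uniq s ->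
           (forall l, l \in s <-> (kr l = v /\ kd l = n)) ->
           P v = \sum_(l <- s) nmul A (S l) (Sst l))].

(* (B, p, s, sst) is a universal Kumjian-Pask family, i.e. B = KP_R(L):
   every Kumjian-Pask family in an R-algebra is the image of (p, s) under
   a unique R-algebra homomorphism. *)
Definition KP_universal (R : comNzRingType) k (L : kgraph k) (B : nalg R)
    (p : kv L -> B) (s sst : kp L -> B) : Prop :=
  KP_family p s sst /\
  forall (A : nalg R) (P : kv L -> A) (S Sst : kp L -> A),
    KP_family P S Sst ->
    exists phi : B -> A,
      [/\ nalg_hom phi,
          (forall v, phi (p v) = P v),
          (forall l, phi (s l) = S l),
          (forall l, phi (sst l) = Sst l)
        & forall psi : B -> A,
            [/\ nalg_hom psi,
                (forall v, psi (p v) = P v),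
                (forall l, psi (s l) = S l)
              & (forall l, psi (sst l) = Sst l)] ->
            forall x, psi x = phi x].

(* Laurent polynomials R[x_1^{+-1}, ..., x_k^{+-1}]: finitely supported
   functions Z^k -> R (coefficient of x^a at a : Z^k), with the R-module
   structure of {malg R[Z^k]} and the convolution product
   (c x^a)(d x^b) = (c d) x^(a+b).                                         *)
Notation Zk k := {ffun 'I_k -> int}.
Definition laurent (R : comNzRingType) (k : nat) := {malg R[Zk k]}.

Definition laurent_mul (R : comNzRingType) k (f g : laurent R k) : laurent R k :=
  \sum_(a <- msupp f) \sum_(b <- msupp g) << f@_a * g@_b *g (a + b) >>.

Definition laurent_dsum (R : comNzRingType) k (V : countType) :=
  {malg (laurent R k)[V]}.

Definition dsum_scale (R : comNzRingType) k (V : countType) (c : R)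
    (f : laurent_dsum R k V) : laurent_dsum R k V :=
  [malg v in msupp f => c *: f@_v].

Definition dsum_mul (R : comNzRingType) k (V : countType)
    (f g : laurent_dsum R k V) : laurent_dsum R k V :=
  [malg v in msupp f => laurent_mul f@_v g@_v].

Definition iso_to_laurent_dsum (R : comNzRingType) k (V : countType)
    (B : nalg R) : Prop :=
  exists phi : B -> laurent_dsum R k V,
    [/\ bijective phi,
        forall x y : B, phi (x + y) = phi x + phi y,
        forall (a : R) (x : B), phi (nscale B a x) = dsum_scale a (phi x)
      & forall x y : B, phi (nmul B x y) = dsum_mul (phi x) (phi y)].

From HB Require Import structures.
From mathcomp Require Import all_boot all_algebra.
From mathcomp Require Import finmap.
From mathcomp.multinomials Require Import monalg.
From mathcomp.classical Require boolp.
From Stdlib Require Import ClassicalEpsilon.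
From mathcomp Require Import zify.

Set Implicit Arguments.
Unset Strict Implicit.
Unset Printing Implicit Defensive.

Import GRing.Theory.
Local Open Scope ring_scope.

(* If KP_R(L) is commutative, then s_l = p_{r(l)} s_l p_{s(l)} vanishes unless
   r(l) = s(l), and for distinct paths l, m of equal degree and range the
   idempotent p_{s(l)} = (s_l^* s_l)(s_m^* s_m) contains the factor
   s_l^* s_m = 0.  Both contradict p_v <> 0, which holds because the vertex
   projections act nontrivially on functions on infinite paths.  Condition (2)
   says precisely that L is a disjoint union of copies of N^k.  In that case
   there is a unique path l(v, n) of degree n at each vertex v, and
   s_{l(v, a+)} s^*_{l(v, a-)} multiplies like the Laurent monomial x^a in the
   v-th summand.  The resulting homomorphism from the direct sum into KP_R(L)
   is injective, as the translation action of KP_R(L) on functions on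
   V x Z^k shows, and it is onto by the universal property.  Finally a direct
   sum of Laurent polynomial rings is commutative. *)

Lemma addNkI k : right_injective (@GRing.add (Nk k)).
Proof.
move=> a b c /ffunP H; apply/ffunP => i.
by have := H i; rewrite !ffunE => /addnI.
Qed.

Section Factorisation.
Variables (k : nat) (L : kgraph k).

Lemma kcomp_inj (a b a' b' : kp L) : ks a = kr b -> ks a' = kr b' ->
  kd a = kd a' -> kcomp a b = kcomp a' b' -> a = a' /\ b = b'.
Proof.
move=> hab hab' hd e.
have hdb : kd b = kd b'.
  by apply: (@addNkI _ (kd a)); rewrite -kd_comp // e kd_comp // hd.
have [[x y] [_ U]] := kfact (kd_comp hab).
have E1 := U (a, b) (And4 hab erefl erefl erefl).
have E2 := U (a', b') (And4 hab' (esym hd) (esym hdb) e).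
by rewrite E1 in E2; case: E2 => -> ->.
Qed.

Lemma kd0_kid (l : kp L) : kd l = 0 -> l = kid (kr l).
Proof.
move=> hl.
have e : kcomp (kid (kr l)) l = kcomp l (kid (ks l)) by rewrite kcomp_idl kcomp_idr.
have [] := kcomp_inj (ks_id _) (esym (kr_id _)) _ e; first by rewrite kd_id hl.
by move=> ->.
Qed.

(* Meaningful only when m <= kd l. *)
Definition kfactor (l : kp L) (m : Nk k) : kp L * kp L :=
  epsilon (inhabits (l, l))
    (fun ab => [/\ ks ab.1 = kr ab.2, kd ab.1 = m & l = kcomp ab.1 ab.2]).

Lemma kfactorP l m n : kd l = m + n ->
  [/\ ks (kfactor l m).1 = kr (kfactor l m).2, kd (kfactor l m).1 = m,
      kd (kfactor l m).2 = n & l = kcomp (kfactor l m).1 (kfactor l m).2].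
Proof.
move=> hl; have [[x y] [[hxy hx _ e] _]] := kfact hl.
have [|h1 h2 h3] := @epsilon_spec _ (inhabits (l, l))
  (fun ab => [/\ ks ab.1 = kr ab.2, kd ab.1 = m & l = kcomp ab.1 ab.2]).
  by exists (x, y).
rewrite -/(kfactor l m) in h1 h2 h3; split => //.
have E : kd l = kd (kfactor l m).1 + kd (kfactor l m).2 by rewrite -kd_comp // -h3.
by apply: (@addNkI _ m); rewrite -hl E h2.
Qed.

Lemma kfactor_comp (a b : kp L) m : ks a = kr b -> kd a = m ->
  kfactor (kcomp a b) m = (a, b).
Proof.
move=> hab ha; have [h1 h2 _ h4] := kfactorP (etrans (kd_comp hab) (congr1 (+%R^~ _) ha)).
have [] := kcomp_inj hab h1 (etrans ha (esym h2)) h4.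
by case: (kfactor _ _) => x y /= -> ->.
Qed.

Lemma kfactor1_compr (a c : kp L) m n : ks a = kr c -> kd a = m + n ->
  (kfactor (kcomp a c) m).1 = (kfactor a m).1.
Proof.
move=> hac ha; have [h1 h2 _ h4] := kfactorP ha.
have h2c : ks (kfactor a m).2 = kr c by rewrite -hac {2}h4 ks_comp.
by rewrite {1}h4 kcompA // kfactor_comp // kr_comp.
Qed.

Lemma kr_kfactor1 l m n : kd l = m + n -> kr (kfactor l m).1 = kr l.
Proof. by move=> hl; have [h1 _ _ h4] := kfactorP hl; rewrite {2}h4 kr_comp. Qed.

Lemma kd_comp_neq0 (l m : kp L) :
  ks l = kr m -> kd l != 0 -> kd (kcomp l m) != 0.
Proof.
move=> hlm; apply: contra => /eqP /ffunP H; apply/eqP/ffunP => i.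
by have := H i; rewrite kd_comp // !ffunE; case: (kd l i).
Qed.

Definition kpick (v : kv L) (n : Nk k) : kp L :=
  epsilon (inhabits (kid v)) (fun l => kr l = v /\ kd l = n).

Lemma kpickP (hns : no_sources L) v n : kr (kpick v n) = v /\ kd (kpick v n) = n.
Proof. exact: (epsilon_spec (inhabits (kid v)) _ (hns v n)). Qed.

End Factorisation.

Section InfinitePaths.
Variables (k : nat) (L : kgraph k).

(* An infinite path x : Omega_k -> L, recorded by its initial segments
   x(0, n); the segment x(m, m + n) is then recovered by factorisation. *)
Record ipath := IPath {
  ip : Nk k -> kp L;
  kd_ip : forall n, kd (ip n) = n;
  kfactor_ip : forall m n, (kfactor (ip (m + n)) m).1 = ip m }.

Lemma ip_inj : injective ip.
Proof.
case=> f fd fp [g gd gp] /= e; subst g.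
by rewrite (boolp.Prop_irrelevance fd gd) (boolp.Prop_irrelevance fp gp).
Qed.

Lemma ip_eq_up (x y : ipath) :
  (forall n, exists q, ip x (n + q) = ip y (n + q)) -> x = y.
Proof.
move=> H; apply: ip_inj; apply: boolp.funext => n.
by have [q e] := H n; rewrite -(kfactor_ip x n q) -(kfactor_ip y n q) e.
Qed.

Lemma ipD_kfactor (x : ipath) m n :
  ks (ip x m) = kr (kfactor (ip x (m + n)) m).2 /\
  ip x (m + n) = kcomp (ip x m) (kfactor (ip x (m + n)) m).2.
Proof. by have [h1 _ _ h4] := kfactorP (kd_ip x (m + n)); rewrite kfactor_ip in h1 h4. Qed.

Definition ir (x : ipath) := kr (ip x 0).

Lemma kr_ip x n : kr (ip x n) = ir x.
Proof.
by have [h e] := ipD_kfactor x 0 n; rewrite add0r in h e; rewrite e kr_comp.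
Qed.

Lemma ks_kr_ip l x n : ks l = ir x -> ks l = kr (ip x n).
Proof. by rewrite kr_ip. Qed.

Lemma ip0 x : ip x 0 = kid (ir x).
Proof. by rewrite (kd0_kid (kd_ip x 0)) kr_ip. Qed.

Definition ishift_ip (x : ipath) m n := (kfactor (ip x (m + n)) m).2.

Lemma kd_ishift_ip x m n : kd (ishift_ip x m n) = n.
Proof. by have [] := kfactorP (kd_ip x (m + n)). Qed.

Lemma kfactor_ishift_ip x m a b :
  (kfactor (ishift_ip x m (a + b)) a).1 = ishift_ip x m a.
Proof.
have [hXQ eT] := ipD_kfactor x m (a + b).
rewrite -/(ishift_ip x m (a + b)) in hXQ eT.
have [h1 h2 _ h4] := kfactorP (kd_ishift_ip x m (a + b)).
set Q := ishift_ip x m (a + b) in hXQ eT h1 h2 h4 *.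
set Q1 := (kfactor Q a).1 in h1 h2 h4 *; set Q2 := (kfactor Q a).2 in h1 h4.
have hXQ1 : ks (ip x m) = kr Q1 by rewrite hXQ h4 kr_comp.
have eA : ip x (m + a) = kcomp (ip x m) Q1.
  have := kfactor_ip x (m + a) b.
  rewrite -addrA eT h4 -kcompA // kfactor_comp ?ks_comp //.
  by rewrite kd_comp // h2 kd_ip.
by rewrite /ishift_ip eA kfactor_comp // kd_ip.
Qed.

Definition ishift (x : ipath) m : ipath :=
  IPath (kd_ishift_ip x m) (kfactor_ishift_ip x m).

Lemma ipD x m n : ks (ip x m) = kr (ip (ishift x m) n) /\
  ip x (m + n) = kcomp (ip x m) (ip (ishift x m) n).
Proof. exact: ipD_kfactor. Qed.

Lemma ir_ishift x m : ir (ishift x m) = ks (ip x m).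
Proof. by have [] := ipD x m 0. Qed.

Lemma ishift_eq x m (y : ipath) :
  (forall n, ks (ip x m) = kr (ip y n) /\ ip x (m + n) = kcomp (ip x m) (ip y n)) ->
  ishift x m = y.
Proof.
move=> H; apply: ip_inj; apply: boolp.funext => n /=.
by have [h1 h2] := H n; rewrite /ishift_ip h2 kfactor_comp // kd_ip.
Qed.

Lemma ishiftD x a b : ishift (ishift x a) b = ishift x (a + b).
Proof.
apply/esym/ishift_eq => n.
have [_ e1] := ipD x a (b + n); have [h2 e2] := ipD (ishift x a) b n.
have [h3 e3] := ipD x a b.
by split; rewrite e3 ?ks_comp // -addrA e1 e2 kcompA.
Qed.

Definition iconcat_ip (l : kp L) (x : ipath) n := (kfactor (kcomp l (ip x n)) n).1.

Section Concatenation.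
Variables (l : kp L) (x : ipath).
Hypothesis lx : ks l = ir x.

Lemma kd_comp_ip n : kd (kcomp l (ip x n)) = n + kd l.
Proof. by rewrite kd_comp ?kd_ip ?(addrC n) //; exact: ks_kr_ip. Qed.

Lemma kd_iconcat_ip n : kd (iconcat_ip l x n) = n.
Proof. by have [] := kfactorP (kd_comp_ip n). Qed.

Lemma kfactor_iconcat_ip a b :
  (kfactor (iconcat_ip l x (a + b)) a).1 = iconcat_ip l x a.
Proof.
have [h1 h2 _ h4] := kfactorP (kd_comp_ip (a + b)).
rewrite /iconcat_ip -(kfactor1_compr (n := b) h1) ?h2 // -h4.
have [hs e] := ipD x a b; have lxa := ks_kr_ip a lx.
by rewrite e -kcompA // (kfactor1_compr (n := kd l)) ?kd_comp_ip // ks_comp.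
Qed.

End Concatenation.

Definition iconcat (l : kp L) (x : ipath) : ipath :=
  match ks l =P ir x with
  | ReflectT lx => IPath (kd_iconcat_ip lx) (kfactor_iconcat_ip lx)
  | ReflectF _ => x
  end.

Lemma ip_iconcatD l x n : ks l = ir x ->
  ip (iconcat l x) (kd l + n) = kcomp l (ip x n).
Proof.
rewrite /iconcat; case: (ks l =P ir x) => // lx _ /=; rewrite /iconcat_ip.
have [hs e] := ipD x n (kd l); have lxn := ks_kr_ip n lx.
by rewrite addrC e -kcompA // kfactor_comp ?kd_comp_ip // ks_comp.
Qed.

Lemma ip_iconcat l x : ks l = ir x -> ip (iconcat l x) (kd l) = l.
Proof. by move=> lx; rewrite -[kd l]addr0 ip_iconcatD // ip0 -lx kcomp_idr. Qed.

Lemma ir_iconcat l x : ks l = ir x -> ir (iconcat l x) = kr l.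
Proof. by move=> lx; rewrite -(kr_ip _ (kd l)) ip_iconcat. Qed.

Lemma ishift_iconcat l x : ks l = ir x -> ishift (iconcat l x) (kd l) = x.
Proof.
move=> lx; apply: ishift_eq => n; rewrite ip_iconcat // ip_iconcatD //.
by split => //; exact: ks_kr_ip.
Qed.

Lemma iconcat_ishift x m : iconcat (ip x m) (ishift x m) = x.
Proof.
apply: ip_eq_up => n; exists m; rewrite addrC.
have := ip_iconcatD n (esym (ir_ishift x m)); rewrite kd_ip => ->.
by have [_ <-] := ipD x m n.
Qed.

Lemma iconcat_comp l m x : ks l = kr m -> ks m = ir x ->
  iconcat l (iconcat m x) = iconcat (kcomp l m) x.
Proof.
move=> hlm mx.
have lmx : ks l = ir (iconcat m x) by rewrite ir_iconcat.
apply: ip_eq_up => n; exists (kd l + kd m).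
rewrite addrC -addrA ip_iconcatD // ip_iconcatD //.
rewrite addrA -kd_comp // ip_iconcatD ?ks_comp // kcompA //; exact: ks_kr_ip.
Qed.

End InfinitePaths.

Section InfinitePathExistence.
Variables (k : nat) (L : kgraph k) (w : kv L).
Hypothesis hns : no_sources L.

Definition Nk1 : Nk k := [ffun _ => 1%N].

Definition Nk_norm (n : Nk k) : nat := (\sum_(i < k) n i)%N.

Lemma Nk_normD a b : Nk_norm (a + b) = (Nk_norm a + Nk_norm b)%N.
Proof. by rewrite /Nk_norm -big_split /=; apply: eq_bigr => i _; rewrite ffunE. Qed.

Lemma Nk1_split (a : Nk k) j : (Nk_norm a <= j)%N -> exists c, Nk1 *+ j = a + c.
Proof.
move=> ha; exists [ffun i => (j - a i)%N]; apply/ffunP => i.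
rewrite ffunMnE !ffunE natn; apply/esym/subnKC; apply: leq_trans ha.
by rewrite /Nk_norm (bigD1 i) //= leq_addr.
Qed.

(* The path of degree (j, ..., j) from w, extended one diagonal step at a
   time; the diagonal is cofinal in N^k, so these determine an infinite path. *)
Fixpoint diag_path j : kp L :=
  if j is j'.+1 then kcomp (diag_path j') (kpick (ks (diag_path j')) Nk1)
  else kid w.

Lemma kd_diag_path j : kd (diag_path j) = Nk1 *+ j.
Proof.
elim: j => [|j IH] /=; first by rewrite kd_id mulr0n.
have [h1 h2] := kpickP hns (ks (diag_path j)) Nk1.
by rewrite kd_comp ?h1 // IH h2 mulrSr.
Qed.

Lemma kr_diag_path j : kr (diag_path j) = w.
Proof.
elim: j => [|j IH] /=; first by rewrite kr_id.
by have [h1 _] := kpickP hns (ks (diag_path j)) Nk1; rewrite kr_comp ?h1.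
Qed.

Lemma diag_pathD j d :
  exists c, ks (diag_path j) = kr c /\ diag_path (j + d) = kcomp (diag_path j) c.
Proof.
elim: d => [|d [c [h e]]].
  by exists (kid (ks (diag_path j))); rewrite addn0 kr_id kcomp_idr.
have [h1 _] := kpickP hns (ks (diag_path (j + d))) Nk1.
have hc : ks c = kr (kpick (ks (diag_path (j + d))) Nk1) by rewrite h1 e ks_comp.
exists (kcomp c (kpick (ks (diag_path (j + d))) Nk1)); rewrite addnS /=.
by split; rewrite ?kr_comp // {1}e kcompA.
Qed.

Lemma kfactor_diag_path a j j' : (Nk_norm a <= j)%N -> (j <= j')%N ->
  (kfactor (diag_path j') a).1 = (kfactor (diag_path j) a).1.
Proof.
move=> ha hj; have [c hc] := Nk1_split ha.
have [d [h e]] := diag_pathD j (j' - j); rewrite subnKC // in e.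
by rewrite e (kfactor1_compr (n := c)) // kd_diag_path.
Qed.

Definition diag_ip n := (kfactor (diag_path (Nk_norm n)) n).1.

Lemma kd_diag_ip n : kd (diag_ip n) = n.
Proof.
have [c hc] := @Nk1_split n _ (leqnn _).
by have [] := kfactorP (etrans (kd_diag_path _) hc).
Qed.

Lemma kfactor_diag_ip m n : (kfactor (diag_ip (m + n)) m).1 = diag_ip m.
Proof.
have [c hc] := @Nk1_split (m + n) _ (leqnn _).
have [h1 h2 _ h4] := kfactorP (etrans (kd_diag_path _) hc).
rewrite /diag_ip -(kfactor1_compr (n := n) h1) ?h2 // -h4.
by apply: kfactor_diag_path; rewrite // Nk_normD leq_addr.
Qed.

Definition diag_ipath : ipath L := IPath kd_diag_ip kfactor_diag_ip.

Lemma ir_diag_ipath : ir diag_ipath = w.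
Proof.
have [c hc] := @Nk1_split 0 (Nk_norm 0) (leqnn _).
by rewrite /ir /= /diag_ip (kr_kfactor1 (etrans (kd_diag_path _) hc)) kr_diag_path.
Qed.

End InfinitePathExistence.

Lemma big_seq_if_eq (V : nmodType) (T : eqType) (s : seq T) a (G : T -> V) :
  uniq s -> \sum_(l <- s) (if a == l then G l else 0) = if a \in s then G a else 0.
Proof.
elim: s => [|b s IH]; first by rewrite big_nil.
rewrite big_cons /= in_cons => /andP [hb hu]; rewrite IH //.
case: eqP => [->|_] /=; last by rewrite add0r.
by rewrite (negbTE hb) addr0.
Qed.

Section NalgTheory.
Variables (R : comNzRingType) (A : nalg R).

Lemma nmulr0 (x : A) : nmul A x 0 = 0.
Proof. by apply: (@addrI _ (nmul A x 0)); rewrite -nmulDr !addr0. Qed.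

Lemma nmul0r (x : A) : nmul A 0 x = 0.
Proof. by apply: (@addrI _ (nmul A 0 x)); rewrite -nmulDl !addr0. Qed.

Lemma nscaler0 a : nscale A a 0 = 0.
Proof. by apply: (@addrI _ (nscale A a 0)); rewrite -nscaleDr !addr0. Qed.

Lemma nscale0r (x : A) : nscale A 0 x = 0.
Proof. by apply: (@addrI _ (nscale A 0 x)); rewrite -nscaleDl !addr0. Qed.

Lemma nmul_suml (I : Type) (r : seq I) (F : I -> A) y :
  nmul A (\sum_(i <- r) F i) y = \sum_(i <- r) nmul A (F i) y.
Proof.
elim: r => [|a r IH]; first by rewrite !big_nil nmul0r.
by rewrite !big_cons nmulDl IH.
Qed.

Lemma nmul_sumr (I : Type) (r : seq I) (F : I -> A) y :
  nmul A y (\sum_(i <- r) F i) = \sum_(i <- r) nmul A y (F i).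
Proof.
elim: r => [|a r IH]; first by rewrite !big_nil nmulr0.
by rewrite !big_cons nmulDr IH.
Qed.

Lemma nscale_sumr (I : Type) (r : seq I) (F : I -> A) c :
  nscale A c (\sum_(i <- r) F i) = \sum_(i <- r) nscale A c (F i).
Proof.
elim: r => [|a r IH]; first by rewrite !big_nil nscaler0.
by rewrite !big_cons nscaleDr IH.
Qed.

Variables (B : nalg R) (f : A -> B).
Hypothesis hf : nalg_hom f.

Lemma nalg_hom0 : f 0 = 0.
Proof. by case: hf => hD _ _; apply: (@addrI _ (f 0)); rewrite -hD !addr0. Qed.

Lemma nalg_hom_sum (I : Type) (r : seq I) (F : I -> A) :
  f (\sum_(i <- r) F i) = \sum_(i <- r) f (F i).
Proof.
elim: r => [|a r IH]; first by rewrite !big_nil nalg_hom0.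
by case: hf => hD _ _; rewrite !big_cons hD IH.
Qed.

End NalgTheory.

Section LinearOperators.
Variables (R : comNzRingType) (X : Type).

Record lop := Lop {
  lop_fun :> (X -> R) -> X -> R;
  lopD : forall F G, lop_fun (fun x => F x + G x) = (fun x => lop_fun F x + lop_fun G x);
  lopZ : forall a F, lop_fun (fun x => a * F x) = (fun x => a * lop_fun F x) }.

Lemma lopP (f g : lop) : (forall F x, f F x = g F x) -> f = g.
Proof.
case: f g => [f fD fZ] [g gD gZ] /= H.
have e : f = g by apply: boolp.funext => F; apply: boolp.funext => x; exact: H.
by subst g; rewrite (boolp.Prop_irrelevance fD gD) (boolp.Prop_irrelevance fZ gZ).
Qed.

Definition lop0 : lop.
Proof.
by refine (@Lop (fun _ _ => 0) _ _) => *; apply: boolp.funext => x; rewrite ?addr0 ?mulr0.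
Defined.

Definition lop_add (f g : lop) : lop.
Proof.
refine (@Lop (fun F x => f F x + g F x) _ _) => *; apply: boolp.funext => x.
  by rewrite !lopD addrACA.
by rewrite !lopZ mulrDr.
Defined.

Definition lop_opp (f : lop) : lop.
Proof.
refine (@Lop (fun F x => - f F x) _ _) => *; apply: boolp.funext => x.
  by rewrite lopD opprD.
by rewrite lopZ mulrN.
Defined.

HB.instance Definition _ := boolp.gen_eqMixin lop.
HB.instance Definition _ := boolp.gen_choiceMixin lop.

Lemma lop_addA : associative lop_add.
Proof. by move=> f g h; apply: lopP => F x /=; rewrite addrA. Qed.
Lemma lop_addC : commutative lop_add.
Proof. by move=> f g; apply: lopP => F x /=; rewrite addrC. Qed.
Lemma lop_add0 : left_id lop0 lop_add.
Proof. by move=> f; apply: lopP => F x /=; rewrite add0r. Qed.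
Lemma lop_addN : left_inverse lop0 lop_opp lop_add.
Proof. by move=> f; apply: lopP => F x /=; rewrite addNr. Qed.

HB.instance Definition _ := GRing.isZmodule.Build lop lop_addA lop_addC lop_add0 lop_addN.

Definition lop_scale (a : R) (f : lop) : lop.
Proof.
refine (@Lop (fun F x => a * f F x) _ _) => *; apply: boolp.funext => x.
  by rewrite lopD mulrDr.
by rewrite lopZ mulrCA.
Defined.

Definition lop_comp (f g : lop) : lop.
Proof.
by refine (@Lop (fun F => f (g F)) _ _) => *; [rewrite !lopD | rewrite !lopZ].
Defined.

Lemma lop_scaleA a b f : lop_scale a (lop_scale b f) = lop_scale (a * b) f.
Proof. by apply: lopP => F x /=; rewrite mulrA. Qed.
Lemma lop_scale1 f : lop_scale 1 f = f.
Proof. by apply: lopP => F x /=; rewrite mul1r. Qed.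
Lemma lop_scaleDr a f g : lop_scale a (f + g) = lop_scale a f + lop_scale a g.
Proof. by apply: lopP => F x /=; rewrite mulrDr. Qed.
Lemma lop_scaleDl a b f : lop_scale (a + b) f = lop_scale a f + lop_scale b f.
Proof. by apply: lopP => F x /=; rewrite mulrDl. Qed.
Lemma lop_compA f g h : lop_comp f (lop_comp g h) = lop_comp (lop_comp f g) h.
Proof. by apply: lopP. Qed.
Lemma lop_compDl f g h : lop_comp (f + g) h = lop_comp f h + lop_comp g h.
Proof. by apply: lopP. Qed.
Lemma lop_compDr f g h : lop_comp f (g + h) = lop_comp f g + lop_comp f h.
Proof. by apply: lopP => F x /=; rewrite lopD. Qed.
Lemma lop_compZl a f g : lop_comp (lop_scale a f) g = lop_scale a (lop_comp f g).
Proof. by apply: lopP. Qed.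
Lemma lop_compZr a f g : lop_comp f (lop_scale a g) = lop_scale a (lop_comp f g).
Proof. by apply: lopP => F x /=; rewrite lopZ. Qed.

Definition lop_nalg : nalg R :=
  @NAlg R lop lop_scale lop_comp lop_scaleA lop_scale1 lop_scaleDr lop_scaleDl
    lop_compA lop_compDl lop_compDr lop_compZl lop_compZr.

Lemma lop_sumE (I : Type) (s : seq I) (f : I -> lop) F x :
  (\sum_(i <- s) f i) F x = \sum_(i <- s) f i F x.
Proof. by elim: s => [|a s IH]; rewrite ?big_nil // !big_cons /= IH. Qed.

Definition pullback (c : X -> bool) (g : X -> X) : lop.
Proof.
refine (@Lop (fun F x => if c x then F (g x) else 0) _ _) => *.
  by apply: boolp.funext => x; case: (c x); rewrite ?addr0.
by apply: boolp.funext => x; case: (c x); rewrite ?mulr0.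
Defined.

Lemma pullback_comp c g c' g' : lop_comp (pullback c g) (pullback c' g') =
  pullback (fun x => c x && c' (g x)) (fun x => g' (g x)).
Proof. by apply: lopP => F x /=; case: (c x). Qed.

End LinearOperators.

Arguments pullback {R X} c g.

Section InfinitePathRepresentation.
Variables (R : comNzRingType) (k : nat) (L : kgraph k).

Local Notation X := (ipath L).
Local Notation A := (lop_nalg R X).

(* Dual to the usual action on infinite paths: S_l reads off an initial
   segment l and shifts, S_l^* prepends l. *)
Definition ipath_P v : A := pullback (fun x : X => ir x == v) id.
Definition ipath_S l : A :=
  if kd l == 0 then ipath_P (kr l)
  else pullback (fun x : X => ip x (kd l) == l) (fun x => ishift x (kd l)).
Definition ipath_Sst l : A :=
  if kd l == 0 then ipath_P (kr l)
  else pullback (fun x : X => ir x == ks l) (iconcat l).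

Lemma ip_kcompE (x : X) l m : ks l = kr m ->
  (ip x (kd l + kd m) == kcomp l m) =
  (ip x (kd l) == l) && (ip (ishift x (kd l)) (kd m) == m).
Proof.
move=> hlm; have [hs e] := ipD x (kd l) (kd m).
rewrite e; apply/eqP/andP => [E|[/eqP -> /eqP ->]] //.
by have [-> ->] := kcomp_inj hs hlm (kd_ip _ _) E.
Qed.

Section NonzeroDegree.
Variables (l m : kp L).
Hypothesis hl : kd l != 0.

Lemma ipath_S_comp : kd m != 0 -> ks l = kr m ->
  nmul A (ipath_S l) (ipath_S m) = ipath_S (kcomp l m) /\
  nmul A (ipath_Sst m) (ipath_Sst l) = ipath_Sst (kcomp l m).
Proof.
move=> hm hlm; rewrite /ipath_S /ipath_Sst (negbTE hl) (negbTE hm).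
rewrite (negbTE (kd_comp_neq0 hlm hl)) /= !pullback_comp.
split; apply: lopP => F x /=; first by rewrite kd_comp // ip_kcompE // ishiftD.
rewrite ks_comp //; case: eqP => //= hx.
by rewrite ir_iconcat // hlm eqxx iconcat_comp.
Qed.

Lemma ipath_S_vertex :
  [/\ nmul A (ipath_P (kr l)) (ipath_S l) = ipath_S l,
      nmul A (ipath_S l) (ipath_P (ks l)) = ipath_S l,
      nmul A (ipath_P (ks l)) (ipath_Sst l) = ipath_Sst l
    & nmul A (ipath_Sst l) (ipath_P (kr l)) = ipath_Sst l].
Proof.
rewrite /ipath_S /ipath_Sst (negbTE hl) /= /ipath_P !pullback_comp.
split; apply: lopP => F x /=.
- by case: (ip x (kd l) =P l) => [<-|_]; rewrite ?andbF // kr_ip eqxx.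
- by case: eqP => //= h; rewrite ir_ishift h eqxx.
- by rewrite andbb.
- by case: eqP => //= h; rewrite ir_iconcat // eqxx.
Qed.

Lemma ipath_Sst_S : kd l = kd m ->
  nmul A (ipath_Sst l) (ipath_S m) = if l == m then ipath_P (ks l) else 0.
Proof.
move=> hlm; have hm : kd m != 0 by rewrite -hlm.
rewrite /ipath_S /ipath_Sst (negbTE hl) (negbTE hm) /= pullback_comp.
apply: lopP => F x /=; rewrite -hlm.
case: (ir x =P ks l) => [h|h] /=; last by case: (l =P m) => //= _; case: eqP.
rewrite ip_iconcat // ishift_iconcat //.
by case: (l =P m) => //= _; rewrite h eqxx.
Qed.

End NonzeroDegree.

Lemma ipath_vertex_sum v n : n != 0 -> forall s : seq (kp L), uniq s ->
  (forall l, l \in s <-> (kr l = v /\ kd l = n)) ->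
  ipath_P v = \sum_(l <- s) nmul A (ipath_S l) (ipath_Sst l).
Proof.
move=> hn s hu hs; apply: lopP => F x; rewrite lop_sumE.
rewrite (eq_big_seq (fun l => if ip x n == l then F x else 0)); last first.
  move=> l /hs [_ hd]; rewrite /ipath_S /ipath_Sst hd (negbTE hn) /=.
  by case: eqP => [<-|] //; rewrite ir_ishift eqxx iconcat_ishift.
rewrite big_seq_if_eq //= /ipath_P /=.
have := hs (ip x n); rewrite kr_ip kd_ip.
case: (ip x n \in s) => -[h1 h2]; case: eqP => // E.
  by case: E; case: (h1 isT).
by have := h2 (conj E erefl).
Qed.

Lemma ipath_KP_family : KP_family ipath_P ipath_S ipath_Sst.
Proof.
split.
- by move=> v; rewrite /ipath_S /ipath_Sst kd_id eqxx kr_id.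
- split=> [v|v w hvw]; apply: lopP => F x /=; first by case: eqP.
  by case: eqP => // ->; case: eqP.
- split; [exact: ipath_S_comp | exact: ipath_S_vertex].
- exact: ipath_Sst_S.
- exact: ipath_vertex_sum.
Qed.

End InfinitePathRepresentation.

Lemma KP_universal_vertex_neq0 (R : comNzRingType) k (L : kgraph k)
    (B : nalg R) (p : kv L -> B) (s sst : kp L -> B) :
  no_sources L -> KP_universal p s sst -> forall v, p v != 0.
Proof.
move=> hns [_ hU] v; have [phi [hphi hp _ _ _]] := hU _ _ _ _ (@ipath_KP_family R k L).
apply/eqP => pv0; have := hp v; rewrite pv0 nalg_hom0 // => E.
have := congr1 (fun f : lop R (ipath L) => f (fun _ => 1) (diag_ipath v hns)) E.
by rewrite /= ir_diag_ipath eqxx => /esym/eqP; rewrite oner_eq0.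
Qed.

Section KPFamilyTheory.
Variables (R : comNzRingType) (k : nat) (L : kgraph k) (A : nalg R).
Variables (P : kv L -> A) (S Sst : kp L -> A).
Hypothesis hF : KP_family P S Sst.

Lemma KP_S_kid v : S (kid v) = P v.
Proof. by case: hF => /(_ v) []. Qed.

Lemma KP_Sst_kid v : Sst (kid v) = P v.
Proof. by case: hF => /(_ v) []. Qed.

Lemma KP_P_idem v : nmul A (P v) (P v) = P v.
Proof. by case: hF => _ [->]. Qed.

Lemma KP_P_orth v w : v <> w -> nmul A (P v) (P w) = 0.
Proof. by move=> vw; case: hF => _ [_ ->]. Qed.

Lemma KP_vertex_sum v n : n != 0 -> forall s : seq (kp L), uniq s ->
  (forall l, l \in s <-> (kr l = v /\ kd l = n)) ->
  P v = \sum_(l <- s) nmul A (S l) (Sst l).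
Proof. by move=> hn; case: hF => _ _ _ _ /(_ v n hn). Qed.

(* With the convention S_v = S_v^* = P_v, relations (KP2) and (KP3) extend
   to paths of degree 0. *)
Lemma KP_vertexP l :
  [/\ nmul A (P (kr l)) (S l) = S l, nmul A (S l) (P (ks l)) = S l,
      nmul A (P (ks l)) (Sst l) = Sst l & nmul A (Sst l) (P (kr l)) = Sst l].
Proof.
have [l0|hl] := eqVneq (kd l) 0; last by case: hF => _ _ [_ /(_ l hl)].
by rewrite (kd0_kid l0) kr_id ks_id KP_S_kid KP_Sst_kid KP_P_idem.
Qed.

Lemma KP_S_comp l m : ks l = kr m -> nmul A (S l) (S m) = S (kcomp l m).
Proof.
move=> hlm; have [l0|hl] := eqVneq (kd l) 0.
  have e := kd0_kid l0; rewrite e ks_id in hlm.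
  by rewrite e hlm KP_S_kid kcomp_idl; case: (KP_vertexP m).
have [m0|hm] := eqVneq (kd m) 0.
  by rewrite (kd0_kid m0) -hlm KP_S_kid kcomp_idr; case: (KP_vertexP l).
by case: hF => _ _ [/(_ l m hl hm hlm) []].
Qed.

Lemma KP_Sst_comp l m : ks l = kr m -> nmul A (Sst m) (Sst l) = Sst (kcomp l m).
Proof.
move=> hlm; have [l0|hl] := eqVneq (kd l) 0.
  have e := kd0_kid l0; rewrite e ks_id in hlm.
  by rewrite e hlm KP_Sst_kid kcomp_idl; case: (KP_vertexP m).
have [m0|hm] := eqVneq (kd m) 0.
  by rewrite (kd0_kid m0) -hlm KP_Sst_kid kcomp_idr; case: (KP_vertexP l).
by case: hF => _ _ [/(_ l m hl hm hlm) []].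
Qed.

Lemma KP_Sst_S l m : kd l = kd m ->
  nmul A (Sst l) (S m) = if l == m then P (ks l) else 0.
Proof.
move=> hlm; have [l0|hl] := eqVneq (kd l) 0; last by case: hF => _ _ _ ->.
rewrite (kd0_kid l0) (kd0_kid (etrans (esym hlm) l0)) KP_Sst_kid KP_S_kid ks_id.
case: (kr l =P kr m) => [->|ne]; first by rewrite eqxx KP_P_idem.
by rewrite KP_P_orth //; case: eqP => // /(congr1 (fun l => kr l)); rewrite !kr_id.
Qed.

Lemma KP_Sst_S_same l : nmul A (Sst l) (S l) = P (ks l).
Proof. by rewrite KP_Sst_S // eqxx. Qed.

End KPFamilyTheory.

Section CommutativeKP.
Variables (R : comNzRingType) (k : nat) (L : kgraph k).
Variables (B : nalg R) (p : kv L -> B) (s sst : kp L -> B).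
Hypotheses (hns : no_sources L) (hB : KP_universal p s sst).
Hypothesis hC : nalg_commutative B.

Let hF : KP_family p s sst. Proof. by case: hB. Qed.
Let p_neq0 := KP_universal_vertex_neq0 hns hB.

Lemma commutative_KP_kr_ks (l : kp L) : kr l = ks l.
Proof.
apply/eqP/negbNE/negP => /eqP ne; case/eqP: (p_neq0 (ks l)).
have [Prl slP _ _] := KP_vertexP hF l.
have sl0 : s l = 0.
  by rewrite -slP -Prl -nmulA (hC (s l)) nmulA (KP_P_orth hF ne) nmul0r.
by rewrite -(KP_Sst_S_same hF) sl0 nmulr0.
Qed.

Lemma commutative_KP_kr_inj n (l m : kp L) : kd l = n -> kd m = n -> kr l = kr m -> l = m.
Proof.
move=> <- hm hlm; apply/eqP/negbNE/negP => ne; case/eqP: (p_neq0 (ks l)).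
have sml : ks m = ks l by rewrite -!commutative_KP_kr_ks hlm.
have E : nmul B (sst l) (s m) = 0 by rewrite (KP_Sst_S hF) ?hm // (negbTE ne).
rewrite -(KP_P_idem hF) -{1}(KP_Sst_S_same hF l) -sml -(KP_Sst_S_same hF m).
rewrite nmulA -(nmulA (sst l) (s l) (sst m)) (hC (sst l)).
by rewrite -nmulA E nmulr0.
Qed.

End CommutativeKP.

Section LoopGraphs.
Variables (k : nat) (L : kgraph k).

Lemma loops_kgraph_iso : no_sources L ->
  (forall l : kp L, kr l = ks l) ->
  (forall (n : Nk k) (l m : kp L), kd l = n -> kd m = n -> kr l = kr m -> l = m) ->
  kgraph_iso L (disjoint_union_Nk k (kv L)).
Proof.
move=> hns H1 H2; exists id, (fun l => (kr l, kd l)); split.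
- split; first by exists id.
  exists (fun x : kv L * Nk k => kpick x.1 x.2) => [l|[v n]] /=.
    by have [h1 h2] := kpickP hns (kr l) (kd l); exact: (H2 (kd l)).
  by have [-> ->] := kpickP hns v n.
- by split => l; rewrite // H1.
- by move=> v; rewrite kr_id kd_id.
- by move=> l m hlm; rewrite kr_comp // kd_comp.
- by [].
Qed.

Lemma kgraph_iso_loops : kgraph_iso L (disjoint_union_Nk k (kv L)) ->
  (forall l : kp L, kr l = ks l) /\
  (forall (n : Nk k) (l m : kp L), kd l = n -> kd m = n -> kr l = kr m -> l = m).
Proof.
move=> [fv [fp [[/bij_inj fv_inj /bij_inj fp_inj] [hr hs] _ _ hd]]].
have fpE l : fp l = (fv (kr l), kd l) by rewrite -hr -hd; case: (fp l).
split=> [l | n l m hl hm hlm]; first by apply: fv_inj; rewrite -hr -hs.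
by apply: fp_inj; rewrite !fpE hl hm hlm.
Qed.

End LoopGraphs.

Lemma laurent_mulC (R : comNzRingType) k (f g : laurent R k) :
  laurent_mul f g = laurent_mul g f.
Proof.
rewrite /laurent_mul exchange_big; apply: eq_bigr => a _; apply: eq_bigr => b _.
by rewrite mulrC addrC.
Qed.

Lemma laurent_mul0l (R : comNzRingType) k (g : laurent R k) : laurent_mul 0 g = 0.
Proof. by rewrite /laurent_mul msupp0 big_seq_fset0. Qed.

Lemma laurent_mul0r (R : comNzRingType) k (g : laurent R k) : laurent_mul g 0 = 0.
Proof. by rewrite laurent_mulC laurent_mul0l. Qed.

Lemma msupp_malg_sub (K : choiceType) (G : zmodType) (d : {fset K}) (E : K -> G) :
  (msupp [malg x in d => E x] `<=` d)%fset.
Proof.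
apply/fsubsetP => x; rewrite -mcoeff_neq0 mcoeffE.
by case: ifP => //; rewrite eqxx.
Qed.

Lemma dsum_mulE (R : comNzRingType) k (V : countType) (f g : laurent_dsum R k V) v :
  (dsum_mul f g)@_v = laurent_mul f@_v g@_v.
Proof.
rewrite /dsum_mul mcoeffE; case: ifP => // /negbT h.
by rewrite (mcoeff_outdom h) laurent_mul0l.
Qed.

Lemma dsum_scaleE (R : comNzRingType) k (V : countType) c (f : laurent_dsum R k V) v :
  (dsum_scale c f)@_v = c *: f@_v.
Proof.
rewrite /dsum_scale mcoeffE; case: ifP => // /negbT h.
by rewrite (mcoeff_outdom h) scaler0.
Qed.

Lemma dsum_mulC (R : comNzRingType) k (V : countType) (f g : laurent_dsum R k V) :
  dsum_mul f g = dsum_mul g f.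
Proof. by apply/malgP => v; rewrite !dsum_mulE laurent_mulC. Qed.

Lemma iso_laurent_dsum_commutative (R : comNzRingType) k (V : countType) (B : nalg R) :
  iso_to_laurent_dsum k V B -> nalg_commutative B.
Proof.
by move=> [phi [/bij_inj phi_inj _ _ phiM]] x y; apply: phi_inj; rewrite !phiM dsum_mulC.
Qed.

Section LoopPaths.
Variables (k : nat) (L : kgraph k).
Implicit Types (v : kv L) (l : kp L).
Hypothesis hns : no_sources L.
Hypothesis H1 : forall l : kp L, kr l = ks l.
Hypothesis H2 : forall (n : Nk k) (l m : kp L),
  kd l = n -> kd m = n -> kr l = kr m -> l = m.

Lemma kr_kpick v n : kr (kpick v n) = v. Proof. by case: (kpickP hns v n). Qed.
Lemma kd_kpick v n : kd (kpick v n) = n. Proof. by case: (kpickP hns v n). Qed.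
Lemma ks_kpick v n : ks (kpick v n) = v. Proof. by rewrite -H1 kr_kpick. Qed.

Lemma kpick_eq l : kpick (kr l) (kd l) = l.
Proof. exact: (H2 (kd_kpick _ _) erefl (kr_kpick _ _)). Qed.

Lemma kpick_eqP v n l : l = kpick v n <-> kr l = v /\ kd l = n.
Proof.
split=> [->|[<- <-]]; last by rewrite kpick_eq.
by rewrite kr_kpick kd_kpick.
Qed.

Lemma kpick0 v : kpick v 0 = kid v.
Proof. by rewrite (kd0_kid (kd_kpick v 0)) kr_kpick. Qed.

Lemma kpickD v m n : kcomp (kpick v m) (kpick v n) = kpick v (m + n).
Proof.
have h : ks (kpick v m) = kr (kpick v n) by rewrite ks_kpick kr_kpick.
have hd : kd (kcomp (kpick v m) (kpick v n)) = m + n by rewrite kd_comp // !kd_kpick.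
by apply: (H2 hd (kd_kpick _ _)); rewrite kr_comp // !kr_kpick.
Qed.

End LoopPaths.

Section LoopKPFamily.
Variables (R : comNzRingType) (k : nat) (L : kgraph k).
Implicit Types (v w : kv L).
Hypothesis hns : no_sources L.
Hypothesis H1 : forall l : kp L, kr l = ks l.
Hypothesis H2 : forall (n : Nk k) (l m : kp L),
  kd l = n -> kd m = n -> kr l = kr m -> l = m.
Variables (B : nalg R) (p : kv L -> B) (s sst : kp L -> B).
Hypothesis hF : KP_family p s sst.

Local Notation sv v n := (s (kpick v n)).
Local Notation tv v n := (sst (kpick v n)).

Lemma s_kpick0 v : sv v 0 = p v.
Proof. by rewrite (kpick0 hns) (KP_S_kid hF). Qed.

Lemma sst_kpick0 v : tv v 0 = p v.
Proof. by rewrite (kpick0 hns) (KP_Sst_kid hF). Qed.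

Lemma p_s_kpick v n : nmul B (p v) (sv v n) = sv v n.
Proof. by have [h _ _ _] := KP_vertexP hF (kpick v n); rewrite (kr_kpick hns) in h. Qed.

Lemma s_kpick_p v n : nmul B (sv v n) (p v) = sv v n.
Proof. by have [_ h _ _] := KP_vertexP hF (kpick v n); rewrite (ks_kpick hns H1) in h. Qed.

Lemma p_sst_kpick v n : nmul B (p v) (tv v n) = tv v n.
Proof. by have [_ _ h _] := KP_vertexP hF (kpick v n); rewrite (ks_kpick hns H1) in h. Qed.

Lemma sst_kpick_p v n : nmul B (tv v n) (p v) = tv v n.
Proof. by have [_ _ _ h] := KP_vertexP hF (kpick v n); rewrite (kr_kpick hns) in h. Qed.

Lemma s_kpickD v m n : nmul B (sv v m) (sv v n) = sv v (m + n).
Proof.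
by rewrite (KP_S_comp hF) ?(kpickD hns H1 H2) // (ks_kpick hns H1) (kr_kpick hns).
Qed.

Lemma sst_kpickD v m n : nmul B (tv v n) (tv v m) = tv v (m + n).
Proof.
by rewrite (KP_Sst_comp hF) ?(kpickD hns H1 H2) // (ks_kpick hns H1) (kr_kpick hns).
Qed.

Lemma sst_s_kpick v n : nmul B (tv v n) (sv v n) = p v.
Proof. by rewrite (KP_Sst_S_same hF) (ks_kpick hns H1). Qed.

Lemma s_sst_kpick v n : nmul B (sv v n) (tv v n) = p v.
Proof.
have [->|hn] := eqVneq n 0; first by rewrite s_kpick0 sst_kpick0 (KP_P_idem hF).
rewrite (KP_vertex_sum hF hn (s := [:: kpick v n])) ?big_seq1 // => l.
by rewrite inE -(kpick_eqP hns H2); split => /eqP.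
Qed.

Lemma s_sst_kpickC v m n : nmul B (sv v n) (tv v m) = nmul B (tv v m) (sv v n).
Proof.
rewrite -{1}(p_s_kpick v n) -(sst_s_kpick v m) -(nmulA (tv v m)) s_kpickD addrC -s_kpickD.
by rewrite -!nmulA s_sst_kpick s_kpick_p.
Qed.

Lemma s_sst_kpick_shift v x y c :
  nmul B (sv v (x + c)) (tv v (y + c)) = nmul B (sv v x) (tv v y).
Proof. by rewrite -s_kpickD -sst_kpickD -nmulA (nmulA (sv v c)) s_sst_kpick nmulA s_kpick_p. Qed.

Lemma s_sst_kpick_eq v x y x' y' : x + y' = x' + y ->
  nmul B (sv v x) (tv v y) = nmul B (sv v x') (tv v y').
Proof.
by move=> e; rewrite -(s_sst_kpick_shift v x y y') -(s_sst_kpick_shift v x' y' y) e (addrC y).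
Qed.

Lemma s_sst_kpick_orth v w x y x' y' : v != w ->
  nmul B (nmul B (sv v x) (tv v y)) (nmul B (sv w x') (tv w y')) = 0.
Proof.
move=> /eqP vw; rewrite -(sst_kpick_p v y) -(p_s_kpick w x') !nmulA -(nmulA _ (p v)).
by rewrite (KP_P_orth hF vw) nmulr0 !nmul0r.
Qed.

End LoopKPFamily.

Definition intp (x : int) : nat := if x is Posz n then n else 0.
Definition intn (x : int) : nat := if x is Negz n then n.+1 else 0.

Lemma intp_intn x : x = (intp x)%:Z - (intn x)%:Z.
Proof. by case: x => n /=; rewrite ?subr0 // NegzE sub0r. Qed.

Lemma intp_intnD x y :
  (intp x + intp y + intn (x + y) = intp (x + y) + (intn y + intn x))%N.
Proof. by have := intp_intn x; have := intp_intn y; have := intp_intn (x + y); lia. Qed.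

Section ZkParts.
Variable k : nat.
Implicit Types (a : Zk k) (n : Nk k).

Definition Zk_of n : Zk k := [ffun i => (n i)%:Z].
Definition Nk_pos a : Nk k := [ffun i => intp (a i)].
Definition Nk_neg a : Nk k := [ffun i => intn (a i)].

Lemma Zk_of0 : Zk_of 0 = 0. Proof. by apply/ffunP => i; rewrite !ffunE. Qed.

Lemma Zk_ofD m n : Zk_of (m + n) = Zk_of m + Zk_of n.
Proof. by apply/ffunP => i; rewrite !ffunE. Qed.

Lemma Zk_of_pos_neg a : Zk_of (Nk_pos a) - Zk_of (Nk_neg a) = a.
Proof. by apply/ffunP => i; rewrite !ffunE -intp_intn. Qed.

Lemma Nk_pos_negD a b :
  Nk_pos a + Nk_pos b + Nk_neg (a + b) = Nk_pos (a + b) + (Nk_neg b + Nk_neg a).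
Proof.
by apply/ffunP => i; rewrite !ffunE; exact: intp_intnD.
Qed.

Lemma Nk_pos0 : Nk_pos 0 = 0. Proof. by apply/ffunP => i; rewrite !ffunE. Qed.
Lemma Nk_neg0 : Nk_neg 0 = 0. Proof. by apply/ffunP => i; rewrite !ffunE. Qed.

Lemma Nk_pos_Zk_of n : Nk_pos (Zk_of n) = n.
Proof. by apply/ffunP => i; rewrite !ffunE. Qed.
Lemma Nk_neg_Zk_of n : Nk_neg (Zk_of n) = 0.
Proof. by apply/ffunP => i; rewrite !ffunE. Qed.
Lemma Nk_pos_oppZk_of n : Nk_pos (- Zk_of n) = 0.
Proof. by apply/ffunP => i; rewrite !ffunE; case: (n i) => [|m] //; rewrite -NegzE. Qed.
Lemma Nk_neg_oppZk_of n : Nk_neg (- Zk_of n) = n.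
Proof. by apply/ffunP => i; rewrite !ffunE; case: (n i) => [|m] //; rewrite -NegzE. Qed.

End ZkParts.

Section LaurentMonomials.
Variables (R : comNzRingType) (k : nat) (L : kgraph k).
Implicit Types (v w : kv L).
Hypothesis hns : no_sources L.
Hypothesis H1 : forall l : kp L, kr l = ks l.
Hypothesis H2 : forall (n : Nk k) (l m : kp L),
  kd l = n -> kd m = n -> kr l = kr m -> l = m.
Variables (B : nalg R) (p : kv L -> B) (s sst : kp L -> B).
Hypothesis hF : KP_family p s sst.

(* The image of the Laurent monomial x^a in the v-th summand. *)
Definition kmono v (a : Zk k) : B :=
  nmul B (s (kpick v (Nk_pos a))) (sst (kpick v (Nk_neg a))).

Lemma kmono0 v : kmono v 0 = p v.
Proof.
by rewrite /kmono Nk_pos0 Nk_neg0 (s_kpick0 hns hF) (sst_kpick0 hns hF) (KP_P_idem hF).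
Qed.

Lemma kmonoM v w a b :
  nmul B (kmono v a) (kmono w b) = if v == w then kmono v (a + b) else 0.
Proof.
case: eqP => [<-|/eqP vw]; last exact: (s_sst_kpick_orth hns hF).
rewrite /kmono -nmulA (nmulA (sst _)) -(s_sst_kpickC hns H1 H2 hF) -nmulA nmulA.
rewrite (s_kpickD hns H1 H2 hF) (sst_kpickD hns H1 H2 hF).
exact/(s_sst_kpick_eq hns H1 H2 hF)/Nk_pos_negD.
Qed.

Definition laurent_KP v (h : laurent R k) : B :=
  \sum_(a <- msupp h) nscale B h@_a (kmono v a).

Definition dsum_KP (f : laurent_dsum R k (kv L)) : B :=
  \sum_(v <- msupp f) laurent_KP v f@_v.

Lemma laurent_KP_sub v h (dom : {fset Zk k}) : (msupp h `<=` dom)%fset ->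
  laurent_KP v h = \sum_(a <- dom) nscale B h@_a (kmono v a).
Proof.
move=> hd; apply: big_fset_incl => // a _ ha.
by rewrite (mcoeff_outdom ha) nscale0r.
Qed.

Lemma laurent_KP0 v : laurent_KP v 0 = 0.
Proof. by rewrite /laurent_KP msupp0 big_seq_fset0. Qed.

Lemma laurent_KPD v h1 h2 : laurent_KP v (h1 + h2) = laurent_KP v h1 + laurent_KP v h2.
Proof.
set d := (msupp h1 `|` msupp h2)%fset.
rewrite !(@laurent_KP_sub v _ d) ?msuppD_le ?fsubsetUl ?fsubsetUr // -big_split /=.
by apply: eq_bigr => a _; rewrite mcoeffD nscaleDl.
Qed.

Lemma laurent_KPZ v c h : laurent_KP v (c *: h) = nscale B c (laurent_KP v h).
Proof.
rewrite (@laurent_KP_sub v _ (msupp h)) ?msuppZ_le // /laurent_KP nscale_sumr.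
by apply: eq_bigr => a _; rewrite mcoeffZ nscaleA.
Qed.

Lemma laurent_KPU v c a : laurent_KP v << c *g a >> = nscale B c (kmono v a).
Proof. by rewrite (@laurent_KP_sub v _ [fset a]%fset) ?msuppU_le // big_seq_fset1 mcoeffUU. Qed.

Lemma laurent_KP_sum v (I : Type) (r : seq I) (F : I -> laurent R k) :
  laurent_KP v (\sum_(i <- r) F i) = \sum_(i <- r) laurent_KP v (F i).
Proof.
elim: r => [|a r IH]; first by rewrite !big_nil laurent_KP0.
by rewrite !big_cons laurent_KPD IH.
Qed.

Lemma laurent_KPM v w h1 h2 : nmul B (laurent_KP v h1) (laurent_KP w h2) =
  if v == w then laurent_KP v (laurent_mul h1 h2) else 0.
Proof.
case: eqP => [<-|/eqP vw].
  rewrite /laurent_mul laurent_KP_sum [in LHS]/laurent_KP nmul_suml.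
  apply: eq_bigr => a _; rewrite laurent_KP_sum nmul_sumr.
  apply: eq_bigr => b _; rewrite laurent_KPU nmulZl nmulZr nscaleA kmonoM eqxx.
  by rewrite mulrC.
rewrite /laurent_KP nmul_suml big1 // => a _; rewrite nmul_sumr big1 // => b _.
by rewrite nmulZl nmulZr kmonoM (negbTE vw) !nscaler0.
Qed.

Lemma dsum_KP_sub f (dom : {fset kv L}) : (msupp f `<=` dom)%fset ->
  dsum_KP f = \sum_(v <- dom) laurent_KP v f@_v.
Proof.
move=> hd; apply: big_fset_incl => // v _ hv.
by rewrite (mcoeff_outdom hv) laurent_KP0.
Qed.

Lemma dsum_KP0 : dsum_KP 0 = 0.
Proof. by rewrite /dsum_KP msupp0 big_seq_fset0. Qed.

Lemma dsum_KPD f g : dsum_KP (f + g) = dsum_KP f + dsum_KP g.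
Proof.
set d := (msupp f `|` msupp g)%fset.
rewrite !(@dsum_KP_sub _ d) ?msuppD_le ?fsubsetUl ?fsubsetUr // -big_split /=.
by apply: eq_bigr => v _; rewrite mcoeffD laurent_KPD.
Qed.

Lemma dsum_KPZ c f : dsum_KP (dsum_scale c f) = nscale B c (dsum_KP f).
Proof.
rewrite (@dsum_KP_sub _ (msupp f)) ?msupp_malg_sub // /dsum_KP nscale_sumr.
by apply: eq_bigr => v _; rewrite dsum_scaleE laurent_KPZ.
Qed.

Lemma dsum_KPU h v : dsum_KP << h *g v >> = laurent_KP v h.
Proof. by rewrite (@dsum_KP_sub _ [fset v]%fset) ?msuppU_le // big_seq_fset1 mcoeffUU. Qed.

Lemma dsum_KP_sum (I : Type) (r : seq I) (F : I -> laurent_dsum R k (kv L)) :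
  dsum_KP (\sum_(i <- r) F i) = \sum_(i <- r) dsum_KP (F i).
Proof.
elim: r => [|a r IH]; first by rewrite !big_nil dsum_KP0.
by rewrite !big_cons dsum_KPD IH.
Qed.

Lemma dsum_KPM f g : dsum_KP (dsum_mul f g) = nmul B (dsum_KP f) (dsum_KP g).
Proof.
rewrite (@dsum_KP_sub _ (msupp f)) ?msupp_malg_sub // {2}/dsum_KP nmul_suml.
apply: eq_bigr => v _; rewrite /dsum_KP nmul_sumr.
under eq_bigr => w _ do rewrite laurent_KPM.
rewrite big_seq_if_eq ?fset_uniq // dsum_mulE; case: ifP => // /negbT hv.
by rewrite (mcoeff_outdom hv) laurent_mul0r laurent_KP0.
Qed.

End LaurentMonomials.

Section TranslationRepresentation.
Variables (R : comNzRingType) (k : nat) (L : kgraph k).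
Hypothesis hns : no_sources L.
Hypothesis H1 : forall l : kp L, kr l = ks l.
Hypothesis H2 : forall (n : Nk k) (l m : kp L),
  kd l = n -> kd m = n -> kr l = kr m -> l = m.

Local Notation X := (kv L * Zk k)%type.
Local Notation A := (lop_nalg R X).

(* Translation of the v-th copy of Z^k by the degree of a loop at v. *)
Definition trans_P v : A := pullback (fun x : X => x.1 == v) id.
Definition trans_S l : A :=
  pullback (fun x : X => x.1 == kr l) (fun x => (x.1, x.2 - Zk_of (kd l))).
Definition trans_Sst l : A :=
  pullback (fun x : X => x.1 == kr l) (fun x => (x.1, x.2 + Zk_of (kd l))).

Lemma trans_KP_family : KP_family trans_P trans_S trans_Sst.
Proof.
split.
- by move=> v; split; apply: lopP => F x /=;
    rewrite kr_id kd_id Zk_of0 ?subr0 ?addr0 -surjective_pairing.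
- split=> [v|v w vw]; apply: lopP => F x /=; first by case: eqP.
  by case: eqP => // ->; case: eqP.
- split=> [l m _ _ hlm | l _].
    have hkm : kr m = kr l by rewrite -hlm H1.
    split; apply: lopP => F x /=; rewrite kr_comp // kd_comp // Zk_ofD hkm;
      case: eqP => //= _; first by rewrite opprD addrA.
    by rewrite (addrC (Zk_of (kd l))) addrA.
  split; apply: lopP => F x /=; rewrite -?H1;
    by case: eqP => //= _; rewrite ?eqxx //= -?surjective_pairing.
- move=> l m _ hlm; apply: lopP => F x /=.
  rewrite hlm addrK -surjective_pairing.
  case: (l =P m) => [<-|ne] /=; first by rewrite -H1; case: eqP.
  case: eqP => //= h1; case: eqP => //= h2; case: ne.
  by apply: (H2 hlm erefl); rewrite -h1 -h2.
- move=> v n _ s hu hs; rewrite (perm_big [:: kpick v n]) ?big_seq1.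
    apply: lopP => F x /=; rewrite (kr_kpick hns).
    by case: eqP => //= _; rewrite (kd_kpick hns) subrK -surjective_pairing.
  apply: uniq_perm => // l; rewrite inE.
  by apply/idP/eqP => [/hs /(kpick_eqP hns H2) | /(kpick_eqP hns H2) /hs].
Qed.

Variables (B : nalg R) (s sst : kp L -> B).
Variable rho : B -> A.
Hypotheses (rho_hom : nalg_hom rho) (rho_s : forall l, rho (s l) = trans_S l).
Hypothesis rho_sst : forall l, rho (sst l) = trans_Sst l.

Lemma rho_kmono v a F (x : X) :
  rho (kmono s sst v a) F x = if x.1 == v then F (x.1, x.2 - a) else 0.
Proof.
case: rho_hom => _ _ rhoM; rewrite /kmono rhoM rho_s rho_sst /=.
rewrite !(kr_kpick hns) !(kd_kpick hns); case: eqP => //= _.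
by rewrite -[in RHS](Zk_of_pos_neg a) opprB addrA addrAC.
Qed.

Lemma rho_dsum_KP_coef f w b :
  rho (dsum_KP s sst f) (fun y : X => if y == (w, 0) then 1 else 0) (w, b) = f@_w@_b.
Proof.
rewrite (nalg_hom_sum rho_hom) lop_sumE.
rewrite (eq_bigr (fun v => if w == v then f@_v@_b else 0)) => [|v _].
  rewrite big_seq_if_eq ?fset_uniq //; case: ifP => // /negbT hw.
  by rewrite (mcoeff_outdom hw) mcoeff0.
rewrite /laurent_KP (nalg_hom_sum rho_hom) lop_sumE.
rewrite (eq_bigr (fun a => if w == v then (if b == a then f@_v@_a else 0) else 0)).
  case: eqP => [<-|_]; last by rewrite big1.
  rewrite big_seq_if_eq ?fset_uniq //; case: ifP => // /negbT hb.
  by rewrite (mcoeff_outdom hb).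
move=> a _; case: rho_hom => _ rhoZ _; rewrite rhoZ /= rho_kmono /=.
case: eqP => //= _; last by rewrite mulr0.
by rewrite xpair_eqE eqxx subr_eq0 /=; case: eqP; rewrite ?mulr1 ?mulr0.
Qed.

End TranslationRepresentation.

Lemma dsum_KP_inj (R : comNzRingType) k (L : kgraph k)
    (B : nalg R) (p : kv L -> B) (s sst : kp L -> B) :
  no_sources L -> (forall l : kp L, kr l = ks l) ->
  (forall (n : Nk k) (l m : kp L), kd l = n -> kd m = n -> kr l = kr m -> l = m) ->
  KP_universal p s sst -> injective (dsum_KP s sst).
Proof.
move=> hns H1 H2 [_ hU] f g e.
have [rho [rho_hom _ rho_s rho_sst _]] := hU _ _ _ _ (trans_KP_family R hns H1 H2).
apply/malgP => w; apply/malgP => b.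
by rewrite -!(rho_dsum_KP_coef hns rho_hom rho_s rho_sst) e.
Qed.

Lemma KP_family_inj_hom (R : comNzRingType) k (L : kgraph k) (A A' : nalg R)
    (f : A' -> A) (P : kv L -> A) (S Sst : kp L -> A)
    (P' : kv L -> A') (S' Sst' : kp L -> A') :
  nalg_hom f -> injective f ->
  (forall v, f (P' v) = P v) -> (forall l, f (S' l) = S l) ->
  (forall l, f (Sst' l) = Sst l) ->
  KP_family P S Sst -> KP_family P' S' Sst'.
Proof.
move=> hf finj fP fS fSst [hv [hP1 hP2] [hK2 hK2'] hK3 hK4].
have [fD _ fM] := hf; have f0 := nalg_hom0 hf.
split.
- by move=> v; split; apply: finj; rewrite ?fS ?fSst fP; case: (hv v).
- by split=> [v | v w vw]; apply: finj; rewrite fM !fP ?hP1 ?hP2 ?f0.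
- split=> [l m hl hm hlm | l hl].
    by have [e1 e2] := hK2 l m hl hm hlm; split; apply: finj; rewrite fM ?fS ?fSst.
  by have [e1 e2 e3 e4] := hK2' l hl; split; apply: finj; rewrite fM ?fS ?fSst fP.
- move=> l m hl hlm; apply: finj; rewrite fM fS fSst hK3 //.
  by case: eqP; rewrite ?fP ?f0.
- move=> v n hn s hu hs; apply: finj; rewrite (nalg_hom_sum hf) fP (hK4 v n hn s hu hs).
  by apply: eq_bigr => l _; rewrite fM fS fSst.
Qed.

Section LaurentIsomorphism.
Variables (R : comNzRingType) (k : nat) (L : kgraph k).
Hypothesis hns : no_sources L.
Hypothesis H1 : forall l : kp L, kr l = ks l.
Hypothesis H2 : forall (n : Nk k) (l m : kp L),
  kd l = n -> kd m = n -> kr l = kr m -> l = m.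
Variables (B : nalg R) (p : kv L -> B) (s sst : kp L -> B).
Hypothesis hB : KP_universal p s sst.

Local Notation D := (laurent_dsum R k (kv L)).
Local Notation psi := (dsum_KP s sst).

Let hF : KP_family p s sst. Proof. by case: hB. Qed.
Let psi_inj : injective psi := dsum_KP_inj hns H1 H2 hB.
Let psiD := dsum_KPD s sst.
Let psiZ := dsum_KPZ s sst.
Let psiM := dsum_KPM hns H1 H2 hF.

(* The algebra laws of the direct sum are pulled back along the injective
   map psi, which spares a direct proof that laurent_mul is associative. *)
Lemma dsum_scaleA a b (x : D) : dsum_scale a (dsum_scale b x) = dsum_scale (a * b) x.
Proof. by apply: psi_inj; rewrite !psiZ nscaleA. Qed.
Lemma dsum_scale1 (x : D) : dsum_scale 1 x = x.
Proof. by apply: psi_inj; rewrite psiZ nscale1. Qed.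
Lemma dsum_scaleDr a (x y : D) : dsum_scale a (x + y) = dsum_scale a x + dsum_scale a y.
Proof. by apply: psi_inj; rewrite !(psiZ, psiD) nscaleDr. Qed.
Lemma dsum_scaleDl a b (x : D) : dsum_scale (a + b) x = dsum_scale a x + dsum_scale b x.
Proof. by apply: psi_inj; rewrite !(psiZ, psiD) nscaleDl. Qed.
Lemma dsum_mulA (x y z : D) : dsum_mul x (dsum_mul y z) = dsum_mul (dsum_mul x y) z.
Proof. by apply: psi_inj; rewrite !psiM nmulA. Qed.
Lemma dsum_mulDl (x y z : D) : dsum_mul (x + y) z = dsum_mul x z + dsum_mul y z.
Proof. by apply: psi_inj; rewrite !(psiM, psiD) nmulDl. Qed.
Lemma dsum_mulDr (x y z : D) : dsum_mul x (y + z) = dsum_mul x y + dsum_mul x z.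
Proof. by apply: psi_inj; rewrite !(psiM, psiD) nmulDr. Qed.
Lemma dsum_mulZl a (x y : D) : dsum_mul (dsum_scale a x) y = dsum_scale a (dsum_mul x y).
Proof. by apply: psi_inj; rewrite !(psiM, psiZ) nmulZl. Qed.
Lemma dsum_mulZr a (x y : D) : dsum_mul x (dsum_scale a y) = dsum_scale a (dsum_mul x y).
Proof. by apply: psi_inj; rewrite !(psiM, psiZ) nmulZr. Qed.

Definition dsum_nalg : nalg R :=
  @NAlg R D (@dsum_scale R k (kv L)) (@dsum_mul R k (kv L))
    dsum_scaleA dsum_scale1 dsum_scaleDr dsum_scaleDl
    dsum_mulA dsum_mulDl dsum_mulDr dsum_mulZl dsum_mulZr.

Lemma dsum_KP_hom : nalg_hom (psi : dsum_nalg -> B).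
Proof. by split; [exact: psiD | exact: psiZ | exact: psiM]. Qed.

Definition dsum_P v : dsum_nalg := << << 1 *g 0 >> *g v >>.
Definition dsum_S l : dsum_nalg := << << 1 *g Zk_of (kd l) >> *g kr l >>.
Definition dsum_Sst l : dsum_nalg := << << 1 *g - Zk_of (kd l) >> *g kr l >>.

Lemma dsum_KP_P v : psi (dsum_P v) = p v.
Proof. by rewrite dsum_KPU laurent_KPU nscale1 (kmono0 hns hF). Qed.

Lemma dsum_KP_S l : psi (dsum_S l) = s l.
Proof.
rewrite dsum_KPU laurent_KPU nscale1 /kmono Nk_pos_Zk_of Nk_neg_Zk_of.
by rewrite (sst_kpick0 hns hF) (s_kpick_p hns H1 hF) (kpick_eq hns H2).
Qed.

Lemma dsum_KP_Sst l : psi (dsum_Sst l) = sst l.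
Proof.
rewrite dsum_KPU laurent_KPU nscale1 /kmono Nk_pos_oppZk_of Nk_neg_oppZk_of.
by rewrite (s_kpick0 hns hF) (p_sst_kpick hns H1 hF) (kpick_eq hns H2).
Qed.

Lemma loops_iso_laurent_dsum : iso_to_laurent_dsum k (kv L) B.
Proof.
have D_family : KP_family dsum_P dsum_S dsum_Sst.
  exact: (KP_family_inj_hom dsum_KP_hom psi_inj dsum_KP_P dsum_KP_S dsum_KP_Sst hF).
have [phi [phi_hom phi_p phi_s phi_sst _]] := proj2 hB _ _ _ _ D_family.
have [id_B [_ _ _ _ uniq_hom]] := proj2 hB _ _ _ _ hF.
have psi_phi_hom : nalg_hom (psi \o phi).
  by case: phi_hom => phiD phiZ phiM; split=> *; rewrite /= ?phiD ?phiZ ?phiM ?psiD ?psiZ ?psiM.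
have psi_phiK : cancel phi psi.
  move=> x; rewrite -[LHS]/((psi \o phi) x) (uniq_hom (psi \o phi)).
    by rewrite -(uniq_hom id) //; do !split.
  by split=> // [v|l|l] /=; rewrite ?phi_p ?phi_s ?phi_sst ?dsum_KP_P ?dsum_KP_S ?dsum_KP_Sst.
by case: phi_hom => *; exists phi; split=> //; exists psi => // f; apply: psi_inj; rewrite psi_phiK.
Qed.

End LaurentIsomorphism.

Theorem proposition5p3 (R : comNzRingType) (k : nat) (hk : (1 <= k)%N)
    (L : kgraph k) (hrf : row_finite L) (hns : no_sources L)
    (B : nalg R) (p : kv L -> B) (s sst : kp L -> B)
    (hB : KP_universal p s sst) :
  [<-> (* (1) KP_R(L) is commutative *)
       nalg_commutative B;
       (* (2) r = s everywhere, and r is injective on each L^n *)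
       (forall l : kp L, kr l = ks l) /\
       (forall (n : Nk k) (l m : kp L), kd l = n -> kd m = n ->
          kr l = kr m -> l = m);
       (* (3) L is isomorphic to the disjoint union of copies of N^k *)
       kgraph_iso L (disjoint_union_Nk k (kv L));
       (* (4) KP_R(L) is isomorphic to a direct sum of Laurent polynomial rings *)
       iso_to_laurent_dsum k (kv L) B].
Proof.
tfae.
- move=> hC; split; first exact: (commutative_KP_kr_ks hns hB hC).
  exact: (commutative_KP_kr_inj hns hB hC).
- by case=> H1 H2; exact: loops_kgraph_iso.
- by move/kgraph_iso_loops => [H1 H2]; exact: (loops_iso_laurent_dsum hns H1 H2 hB).
- exact: iso_laurent_dsum_commutative.
Qed.
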